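(* Let $\pi_1,\pi_2\in\mathcal{P}(\mathcal{X})$ and $M\ge1$. Then for every $\mu_1\in\mathcal{N}(\pi_1,M)$ there exists $\mu_2\in\mathcal{N}(\pi_2,M)$ such that $\|\mu_1-\mu_2\|_{TV}\le M\|\pi_1-\pi_2\|_{TV}$.
   Context: $\mathcal{P}(\mathcal{X})$ is the set of probability distributions on a measurable space $\mathcal{X}$; $\|\mu-\nu\|_{TV}=\sup_A|\mu(A)-\nu(A)|$; $\mathcal{N}(\pi,M)=\{\mu\in\mathcal{P}(\mathcal{X}):\mu(A)\le M\pi(A)\text{ for all measurable }A\}$. *)

From HB Require Import structures.
From mathcomp Require Import all_boot all_order all_algebra.
From mathcomp Require Import all_classical all_reals all_analysis.
Set Implicit Arguments. Unset Strict Implicit. Unset Printing Implicit Defensive.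
Import Order.TTheory GRing.Theory Num.Theory.
Local Open Scope classical_set_scope.
Local Open Scope ring_scope.
Local Open Scope ereal_scope.

Definition tv_dist d (T : measurableType d) (R : realType)
  (mu nu : probability T R) : \bar R :=
  ereal_sup [set `| mu A - nu A | | A in [set A : set T | measurable A]].

Definition in_N d (T : measurableType d) (R : realType)
  (pi : probability T R) (M : R) (mu : probability T R) : Prop :=
  forall A : set T, measurable A -> mu A <= M%:E * pi A.

From HB Require Import structures.
From mathcomp Require Import all_boot all_order all_algebra.
From mathcomp Require Import all_classical all_reals all_analysis.
From mathcomp Require Import lra.
Set Implicit Arguments. Unset Strict Implicit. Unset Printing Implicit Defensive.
Import Order.TTheory GRing.Theory Num.Theory.
Local Open Scope classical_set_scope.
Local Open Scope ring_scope.
Local Open Scope ereal_scope.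

(** Take a Hahn decomposition (P, ~P) of the signed measure mu1 - M pi2 and
    let excess = mu1(P) - M pi2(P) >= 0.  The measure min(mu1, M pi2), that
    is mu1 on ~P plus M pi2 on P, lies in N(pi2, M) and has mass
    1 - excess.  The missing mass is taken as the fraction
    weight = excess / deficit of (M pi2 - mu1) on ~P, whose total mass is
    deficit = M - 1 + excess >= excess.  The resulting probability differs
    from mu1 by at most excess on every set, and
    excess <= M (pi1(P) - pi2(P)) because mu1 is in N(pi1, M). *)

Section real_measure.
Context {d : measure_display} {T : measurableType d} {R : realType}.

Definition mreal (mu : {finite_measure set T -> \bar R}) (A : set T) : R :=
  fine (mu A).

Lemma mrealE (mu : {finite_measure set T -> \bar R}) A :
  measurable A -> mu A = (mreal mu A)%:E.
Proof. by move=> mA; rewrite /mreal fineK// fin_num_measure. Qed.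

Lemma mrealIC (mu : {finite_measure set T -> \bar R}) A B :
  measurable A -> measurable B ->
  mreal mu A = (mreal mu (A `&` B) + mreal mu (A `&` ~` B))%R.
Proof.
move=> mA mB; have mAB := measurableI _ _ mA mB.
have mACB := measurableI _ _ mA (measurableC mB).
apply: EFin_inj; rewrite EFinD -!mrealE//.
by rewrite (measureDI _ mA mB) addeC setDE.
Qed.

Lemma mreal_setC (mu : probability T R) A :
  measurable A -> mreal mu (~` A) = (1 - mreal mu A)%R.
Proof.
move=> mA; have mCA := measurableC mA.
by apply: EFin_inj; rewrite EFinB -!mrealE//; exact: probability_setC.
Qed.

Lemma mnormalize_mass1 (mu : {measure set T -> \bar R})
    (P : probability T R) A :
  mu setT = 1 -> mnormalize mu P A = mu A.
Proof. by move=> mu1; rewrite /mnormalize mu1 onee_eq0/= invr1 mule1. Qed.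

End real_measure.

Section tv_dist.
Context d (T : measurableType d) (R : realType).
Implicit Types mu nu : probability T R.

Lemma tv_dist_ub mu nu A : measurable A -> `|mu A - nu A| <= tv_dist mu nu.
Proof. by move=> mA; apply: ereal_sup_ubound; exists A. Qed.

Lemma tv_dist_le mu nu (e : R) :
  (forall A, measurable A -> `|mreal mu A - mreal nu A| <= e)%R ->
  tv_dist mu nu <= e%:E.
Proof.
move=> le_e; apply: ge_ereal_sup => _ [A mA <-].
by rewrite !mrealE// -EFinB abse_EFin lee_fin le_e.
Qed.

End tv_dist.

Lemma hahn_decomposition_sub d (T : measurableType d) (R : realType)
    (mu pi : {finite_measure set T -> \bar R}) (M : R) :
  exists2 P, measurable P &
    (forall A, measurable A -> A `<=` P -> M * mreal pi A <= mreal mu A)%R /\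
    (forall A, measurable A -> A `<=` ~` P -> mreal mu A <= M * mreal pi A)%R.
Proof.
pose nu := cadd (charge_of_finite_measure mu)
  (cscale (- M)%R (charge_of_finite_measure pi)).
have nuE A : measurable A -> nu A = (mreal mu A - M * mreal pi A)%:E.
  move=> mA; change (mu A + (- M)%:E * pi A = (mreal mu A - M * mreal pi A)%:E).
  by rewrite !mrealE// -EFinM -EFinD mulNr.
have [P [N [[mP posP] [_ negN] PUN _]]] := Hahn_decomposition nu.
have CP_N : ~` P `<=` N.
  by move=> x nPx; have [] : (P `|` N) x by rewrite PUN.
exists P => //; split => A mA sA.
- by rewrite -subr_ge0 -lee_fin -nuE//; exact: posP.
- by rewrite -subr_le0 -lee_fin -nuE//; apply: negN => // x /sA/CP_N.
Qed.

Section correction.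
Context d (T : measurableType d) (R : realType).
Variables (mu pi : probability T R) (M : R) (P : set T).
Hypotheses (M_ge1 : (1 <= M)%R) (mP : measurable P).
Hypothesis pos_P :
  forall A, measurable A -> A `<=` P -> (M * mreal pi A <= mreal mu A)%R.
Hypothesis neg_P :
  forall A, measurable A -> A `<=` ~` P -> (mreal mu A <= M * mreal pi A)%R.
Local Open Scope ring_scope.

Definition excess := mreal mu P - M * mreal pi P.
Definition deficit := M - 1 + excess.

(* If M = 1 and excess = 0, the division by 0 gives weight = 0, which still
   satisfies [weightK]. *)
Definition weight := excess / deficit.

Lemma excess_ge0 : 0 <= excess.
Proof. by rewrite subr_ge0; exact: pos_P. Qed.

Lemma excess_le_deficit : excess <= deficit.
Proof. by rewrite /deficit lerDr subr_ge0. Qed.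

Lemma weight_ge0 : 0 <= weight.
Proof.
by rewrite divr_ge0 ?excess_ge0// (le_trans excess_ge0 excess_le_deficit).
Qed.

Lemma onem_weight_ge0 : 0 <= 1 - weight.
Proof.
rewrite subr_ge0; have [D0|D0] := eqVneq deficit 0.
  by rewrite /weight D0 invr0 mulr0.
have D_gt0 : 0 < deficit.
  by rewrite lt0r D0 (le_trans excess_ge0 excess_le_deficit).
by rewrite ler_pdivrMr// mul1r excess_le_deficit.
Qed.

Lemma weightK : weight * deficit = excess.
Proof.
have [D0|D0] := eqVneq deficit 0; last by rewrite divfK.
apply/esym/eqP; rewrite D0 mulr0 eq_le excess_ge0 andbT -D0.
exact: excess_le_deficit.
Qed.

Definition correction_measure :=
  measure_add
    (measure_add
       (mscale (NngNum onem_weight_ge0) (mrestr mu (measurableC mP)))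
       (mscale (NngNum (mulr_ge0 weight_ge0 (le_trans ler01 M_ge1)))
          (mrestr pi (measurableC mP))))
    (mscale (NngNum (le_trans ler01 M_ge1)) (mrestr pi mP)).

Lemma correction_measureE A : measurable A ->
  correction_measure A = ((1 - weight) * mreal mu (A `&` ~` P)
    + weight * M * mreal pi (A `&` ~` P) + M * mreal pi (A `&` P))%:E.
Proof.
move=> mA; have mAP := measurableI _ _ mA mP.
have mACP := measurableI _ _ mA (measurableC mP).
rewrite /correction_measure /measure_add /msum /= !big_ord_recl !big_ord0 /=.
rewrite /msum !big_ord_recl !big_ord0 /= !adde0 /mscale /mrestr /=.
by rewrite !mrealE// -!EFinM -!EFinD.
Qed.

Lemma correction_measure_setT : correction_measure setT = 1%E.
Proof.
rewrite correction_measureE// !setTI !mreal_setC//; congr EFin.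
by move: weightK; rewrite /deficit /excess; lra.
Qed.

Definition correction : probability T R := mnormalize correction_measure pi.

Lemma mreal_correction A : measurable A -> mreal correction A =
  (1 - weight) * mreal mu (A `&` ~` P) + weight * M * mreal pi (A `&` ~` P)
  + M * mreal pi (A `&` P).
Proof.
move=> mA; apply: EFin_inj; rewrite -mrealE// -correction_measureE//.
exact: mnormalize_mass1 correction_measure_setT.
Qed.

Lemma correction_in_N : in_N pi M correction.
Proof.
move=> A mA; have mACP := measurableI _ _ mA (measurableC mP).
rewrite !mrealE// -EFinM lee_fin mreal_correction// (mrealIC pi mA mP).
have := ler_wpM2l onem_weight_ge0 (neg_P mACP (@subIsetr _ _ _)).
by move: weight_ge0; lra.
Qed.

Let nu A := mreal mu A - M * mreal pi A.

Let nuIC A B : measurable A -> measurable B ->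
  nu A = nu (A `&` B) + nu (A `&` ~` B).
Proof.
by move=> mA mB; rewrite /nu (mrealIC mu mA mB) (mrealIC pi mA mB); lra.
Qed.

Let nuIP_le_excess A : measurable A -> nu (A `&` P) <= excess.
Proof.
move=> mA; rewrite [leRHS](nuIC mP mA) setIC lerDl subr_ge0.
by apply: pos_P; [exact: measurableI (measurableC mA) | exact: subIsetl].
Qed.

Let deficit_le_nuICP A : measurable A -> - deficit <= nu (A `&` ~` P).
Proof.
move=> mA; have mCP := measurableC mP.
have -> : - deficit = nu (~` P).
  by rewrite /nu !mreal_setC// /deficit /excess; lra.
rewrite (nuIC mCP mA) setIC gerDl subr_le0.
by apply: neg_P; [exact: measurableI (measurableC mA) | exact: subIsetl].
Qed.

Lemma correction_close A : measurable A ->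
  `|mreal mu A - mreal correction A| <= excess.
Proof.
move=> mA; have mAP := measurableI _ _ mA mP.
have mACP := measurableI _ _ mA (measurableC mP).
have -> : mreal mu A - mreal correction A =
    nu (A `&` P) + weight * nu (A `&` ~` P).
  by rewrite mreal_correction// (mrealIC mu mA mP) /nu; lra.
have nuIP_ge0 : 0 <= nu (A `&` P).
  by rewrite subr_ge0 pos_P//; exact: subIsetr.
have nuICP_le0 : nu (A `&` ~` P) <= 0.
  by rewrite subr_le0 neg_P//; exact: subIsetr.
have weighted_ge : - excess <= weight * nu (A `&` ~` P).
  by rewrite -weightK -mulrN ler_wpM2l ?weight_ge0 ?deficit_le_nuICP.
have weighted_le0 : weight * nu (A `&` ~` P) <= 0.
  by rewrite mulr_ge0_le0 ?weight_ge0.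
by have := nuIP_le_excess mA; rewrite ler_norml; lra.
Qed.

End correction.

Theorem lemma2p3 (d : measure_display) (T : measurableType d) (R : realType)
  (pi1 pi2 : probability T R) (M : R) (hM : (1 <= M)%R)
  (mu1 : probability T R) (hmu1 : in_N pi1 M mu1) :
  exists mu2 : probability T R,
    in_N pi2 M mu2 /\ tv_dist mu1 mu2 <= M%:E * tv_dist pi1 pi2.
Proof.
have [P mP [posP negP]] := hahn_decomposition_sub mu1 pi2 M.
exists (correction hM mP posP); split; first exact: correction_in_N.
apply: le_trans (tv_dist_le (correction_close hM mP posP negP)) _.
have M_ge0 : (0 <= M)%R by apply: le_trans hM.
have mu1_le := hmu1 P mP; rewrite !mrealE// -EFinM lee_fin in mu1_le.
have excess_le : (excess mu1 pi2 M P <= M * `|mreal pi1 P - mreal pi2 P|)%R.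
  rewrite /excess (le_trans _ (ler_wpM2l M_ge0 (ler_norm _)))//; lra.
apply: (le_trans (_ : _ <= (M * `|mreal pi1 P - mreal pi2 P|)%:E)).
  by rewrite lee_fin.
rewrite EFinM lee_wpmul2l ?lee_fin// -abse_EFin EFinB -!mrealE//.
exact: tv_dist_ub.
Qed.
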